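(* Let $1/n\ll\gamma\ll\tau\ll\varepsilon\ll\alpha\ll 1$, let $k\in\mathbb{N}$, and let $G$ be a $d$-regular digraph on $n$ vertices with $d\geq(\alpha+\varepsilon)n$. If $\mathcal{P}_k=\{V_{ij}:i,j\in[k]\}$ is a $(k^2,\tau,\gamma)$-partition of $G$, then $|V_{i*}|,|V_{*i}|\geq d-\varepsilon n/2$ for all $i\in[k]$. In particular, $\mathcal{P}_k$ is a $(k^2,\alpha+\varepsilon/2,\gamma)$-partition of $G$.
   Context: Hierarchy convention: $x\ll y$ means $x\leq f(y)$ for some implicitly given non-decreasing function $f:(0,1]\to(0,1]$; the statement asserts that such functions exist, the constants being chosen from right to left. A digraph is $d$-regular if every vertex has in- and outdegree $d$. A $k^2$-partition of $V(G)$ is a family $\{V_{ij}:i,j\in[k]\}$ of pairwise disjoint (possibly empty) sets with union $V(G)$; $V_{i*}=\bigcup_j V_{ij}$, $V_{*j}=\bigcup_i V_{ij}$. $E(A,B)$ is the set of edges $ab$ with $a\in A$, $b\in B$. Bad edges: $\mathcal{B}_k(\mathcal{P}_k,G)=\bigcup_{i\neq j}E(V_{i*},V_{*j})$. A $(k^2,\tau,\gamma)$-partition of an $n$-vertex digraph is a $k^2$-partition with $|\mathcal{B}_k(\mathcal{P}_k,G)|\leq\gamma n^2$ and $|V_{i*}|,|V_{*j}|\geq\tau n$ for all $i,j\in[k]$. *)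

From mathcomp Require Import all_boot all_order all_algebra.
From mathcomp Require Import reals.
Set Implicit Arguments. Unset Strict Implicit. Unset Printing Implicit Defensive.
Import Order.TTheory GRing.Theory Num.Theory.

(* A digraph on vertex set 'I_n is a loopless edge relation E : rel 'I_n
   (at most one edge in each direction u->v). *)
Definition loopless (n : nat) (E : rel 'I_n) : Prop := forall v, ~~ E v v.

Definition outdeg n (E : rel 'I_n) (v : 'I_n) : nat := #|[set u | E v u]|.
Definition indeg n (E : rel 'I_n) (v : 'I_n) : nat := #|[set u | E u v]|.

Definition regular n (E : rel 'I_n) (d : nat) : Prop :=
  forall v, outdeg E v = d /\ indeg E v = d.

Definition k2_partition n k (V : 'I_k -> 'I_k -> {set 'I_n}) : Prop :=
  (forall i j i' j', (i, j) != (i', j') -> [disjoint V i j & V i' j']) /\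
  (\bigcup_(p : 'I_k * 'I_k) V p.1 p.2 = [set: 'I_n]).

Definition Vrow n k (V : 'I_k -> 'I_k -> {set 'I_n}) (i : 'I_k) : {set 'I_n} :=
  \bigcup_(j : 'I_k) V i j.
Definition Vcol n k (V : 'I_k -> 'I_k -> {set 'I_n}) (j : 'I_k) : {set 'I_n} :=
  \bigcup_(i : 'I_k) V i j.

Definition bad_edges n k (E : rel 'I_n) (V : 'I_k -> 'I_k -> {set 'I_n})
  : {set 'I_n * 'I_n} :=
  [set p : 'I_n * 'I_n | E p.1 p.2 &&
     [exists i : 'I_k, exists j : 'I_k,
        [&& i != j, p.1 \in Vrow V i & p.2 \in Vcol V j]]].

Local Open Scope ring_scope.

Definition k2_tau_gamma_partition (R : realType) n k (E : rel 'I_n)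
  (V : 'I_k -> 'I_k -> {set 'I_n}) (tau gamma : R) : Prop :=
  k2_partition V /\
  (#|bad_edges E V|%:R <= gamma * n%:R ^+ 2) /\
  (forall i j : 'I_k, tau * n%:R <= #|Vrow V i|%:R /\ tau * n%:R <= #|Vcol V j|%:R).

(* A vertex of V_{i*} sends d edges, and those not landing in V_{*i} land in
   some V_{*j} with j <> i, so they are bad: d |V_{i*}| <= |V_{i*}| |V_{*i}| + gamma n^2.
   As |V_{i*}| >= tau n, this forces |V_{*i}| >= d - eps n / 2 as soon as
   gamma <= tau eps / 2, which is the only constraint the hierarchy needs;
   in-edges give the same bound for |V_{i*}|. *)
From mathcomp Require Import all_boot all_order all_algebra.
From mathcomp Require Import reals.
From mathcomp Require Import lra.
Set Implicit Arguments. Unset Strict Implicit. Unset Printing Implicit Defensive.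
Import Order.TTheory GRing.Theory Num.Theory.

Definition edges_leaving (T : finType) (E : rel T) (A B : {set T}) : {set T * T} :=
  [set p | [&& p.1 \in A, E p.1 p.2 & p.2 \notin B]].

Lemma card_edges_leaving (T : finType) (E : rel T) (A B : {set T}) :
  #|edges_leaving E A B| = (\sum_(u in A) #|[set v | E u v & v \notin B]|)%N.
Proof.
rewrite -sum1_card (eq_bigl _ _ (fun p => in_set _ p)).
rewrite -(pair_big_dep (mem A) (fun u v => E u v && (v \notin B)) (fun _ _ => 1%N)).
by apply: eq_bigr => u _; rewrite sum1_card cardsE.
Qed.

Lemma outdeg_mul_card_le (T : finType) (E : rel T) (d : nat) (A B : {set T}) :
  (forall u, #|[set v | E u v]| = d) ->
  (#|A| * d <= #|A| * #|B| + #|edges_leaving E A B|)%N.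
Proof.
move=> outdeg_d; rewrite card_edges_leaving -!sum_nat_const -big_split.
apply: leq_sum => u _; rewrite -(outdeg_d u).
apply: leq_trans (leq_card_setU B _); apply: subset_leq_card.
by apply/subsetP => v; rewrite !inE => ->; case: (v \in B).
Qed.

Section BadEdges.

Variables (n k : nat) (E : rel 'I_n) (V : 'I_k -> 'I_k -> {set 'I_n}).
Hypothesis partV : k2_partition V.

Lemma mem_Vrow i j v : v \in V i j -> v \in Vrow V i.
Proof. by move=> vV; apply/bigcupP; exists j. Qed.

Lemma mem_Vcol i j v : v \in V i j -> v \in Vcol V j.
Proof. by move=> vV; apply/bigcupP; exists i. Qed.

Lemma k2_partition_cover v : exists i j, v \in V i j.
Proof.
have : v \in \bigcup_(p : 'I_k * 'I_k) V p.1 p.2 by rewrite partV.2 inE.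
by case/bigcupP => -[i j] _ vV; exists i, j.
Qed.

Lemma card_edges_leaving_row_le_bad i :
  (#|edges_leaving E (Vrow V i) (Vcol V i)| <= #|bad_edges E V|)%N.
Proof.
apply/subset_leq_card/subsetP => -[u v]; rewrite !inE /= => /and3P[uA Euv vB].
have [i' [j vV]] := k2_partition_cover v.
rewrite Euv; apply/existsP; exists i; apply/existsP; exists j.
rewrite uA (mem_Vcol vV) !andbT; apply: contraNneq vB => ->.
exact: mem_Vcol vV.
Qed.

Lemma card_edges_entering_col_le_bad i :
  (#|edges_leaving [rel u v | E v u] (Vcol V i) (Vrow V i)| <= #|bad_edges E V|)%N.
Proof.
rewrite -(card_imset _ (can_inj swap_pairK)).
apply/subset_leq_card/subsetP => _ /imsetP[[v u] + ->].
rewrite !inE /= => /and3P[vB Euv uA].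
have [j [j' uV]] := k2_partition_cover u.
rewrite Euv; apply/existsP; exists j; apply/existsP; exists i.
rewrite (mem_Vrow uV) vB !andbT; apply: contraNneq uA => <-.
exact: mem_Vrow uV.
Qed.

End BadEdges.

Local Open Scope ring_scope.

Lemma few_leaving_edges_card_lb (R : realFieldType) (a b d bad n tau gamma eps : R) :
  0 < tau -> 0 < n -> 0 < eps -> gamma <= tau * eps / 2 ->
  a * d <= a * b + bad -> bad <= gamma * n ^+ 2 -> tau * n <= a ->
  d - eps * n / 2 <= b.
Proof.
move=> tau_gt0 n_gt0 eps_gt0 gamma_le count bad_le a_ge.
rewrite leNgt; apply/negP => b_small.
have a_gt0 : 0 < a by nra.
have gamma_n2_le : gamma * n ^+ 2 <= a * (eps * n / 2).
  have : gamma * n ^+ 2 <= tau * eps / 2 * n ^+ 2 by rewrite ler_pM2r ?exprn_gt0.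
  have : tau * n * (eps * n / 2) <= a * (eps * n / 2).
    by rewrite ler_pM2r // divr_gt0 ?mulr_gt0.
  rewrite expr2; lra.
have : a * (eps * n / 2) < a * (d - b) by rewrite ltr_pM2l; lra.
nra.
Qed.

Lemma k2_partition_card_lb (R : realType) n k (E : rel 'I_n) d
    (V : 'I_k -> 'I_k -> {set 'I_n}) (tau gamma eps : R) :
  (0 < n)%N -> 0 < tau -> 0 < eps -> gamma <= tau * eps / 2 ->
  regular E d -> k2_tau_gamma_partition E V tau gamma ->
  forall i : 'I_k, d%:R - eps * n%:R / 2 <= #|Vrow V i|%:R /\
                   d%:R - eps * n%:R / 2 <= #|Vcol V i|%:R.
Proof.
move=> n_gt0 tau_gt0 eps_gt0 gamma_le reg [partV [bad_le card_ge]] i.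
have n_gt0' : 0 < n%:R :> R by rewrite ltr0n.
have [row_ge col_ge] := card_ge i i.
have out_count := outdeg_mul_card_le (Vrow V i) (Vcol V i) (fun u => (reg u).1).
have in_count := @outdeg_mul_card_le _ [rel u v | E v u] d (Vcol V i) (Vrow V i)
  (fun u => (reg u).2).
split.
- apply: (few_leaving_edges_card_lb (a := #|Vcol V i|%:R) tau_gt0 n_gt0' eps_gt0 gamma_le
    _ bad_le col_ge).
  rewrite -!natrM -natrD ler_nat.
  by apply: leq_trans in_count _; rewrite leq_add2l card_edges_entering_col_le_bad.
- apply: (few_leaving_edges_card_lb (a := #|Vrow V i|%:R) tau_gt0 n_gt0' eps_gt0 gamma_le
    _ bad_le row_ge).
  rewrite -!natrM -natrD ler_nat.
  by apply: leq_trans out_count _; rewrite leq_add2l card_edges_leaving_row_le_bad.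
Qed.

Theorem proposition3p8 (R : realType) :
  exists alpha0 : R, 0 < alpha0 /\
  forall alpha : R, 0 < alpha -> alpha <= alpha0 ->
  exists eps0 : R, 0 < eps0 /\
  forall eps : R, 0 < eps -> eps <= eps0 ->
  exists tau0 : R, 0 < tau0 /\
  forall tau : R, 0 < tau -> tau <= tau0 ->
  exists gamma0 : R, 0 < gamma0 /\
  forall gamma : R, 0 < gamma -> gamma <= gamma0 ->
  exists n0 : nat,
  forall (n : nat) (k : nat) (E : rel 'I_n) (d : nat)
         (V : 'I_k -> 'I_k -> {set 'I_n}),
    (n0 <= n)%N ->
    loopless E -> regular E d ->
    (alpha + eps) * n%:R <= d%:R ->
    k2_tau_gamma_partition E V tau gamma ->
    (forall i : 'I_k, d%:R - eps * n%:R / 2 <= #|Vrow V i|%:R /\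
                      d%:R - eps * n%:R / 2 <= #|Vcol V i|%:R) /\
    k2_tau_gamma_partition E V (alpha + eps / 2) gamma.
Proof.
exists 1; split => // alpha _ _.
exists 1; split => // eps eps_gt0 _.
exists 1; split => // tau tau_gt0 _.
exists (tau * eps / 2); split; first by rewrite divr_gt0 ?mulr_gt0.
move=> gamma _ gamma_le.
exists 1%N => n k E d V n_gt0 _ reg d_ge partV.
have card_lb := k2_partition_card_lb n_gt0 tau_gt0 eps_gt0 gamma_le reg partV.
split => //; case: partV => [partV [bad_le _]]; do 2!split => //.
have lb_ge : (alpha + eps / 2) * n%:R <= d%:R - eps * n%:R / 2 by lra.
by move=> i j; split; apply: le_trans lb_ge _; [exact: (card_lb i).1 | exact: (card_lb j).2].
Qed.
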